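(* Let $i\ge1$, $i+1\le k\le 2^i$, and let $f:[k-1]\to\mathcal{P}([i])\setminus\{\emptyset\}$ be an $(i,k)$-prototype. Suppose there exist $n\ge1$ and a partition $\pi=\{P_1,\dots,P_k\}$ of $[n+1]$ into $k$ nonempty blocks such that the set of hyperplanes $\{H_{A_1},\dots,H_{A_i}\}$, where $(A_1,\dots,A_i)=A_{f,\pi}$, is a broken circuit of $\mathcal{A}_n$ with respect to the binary order. Then for every $\tilde n\ge1$ and every partition $\tilde\pi=\{\tilde P_1,\dots,\tilde P_k\}$ of $[\tilde n+1]$ into $k$ nonempty blocks, the set $\{H_{\tilde A_1},\dots,H_{\tilde A_i}\}$ with $(\tilde A_1,\dots,\tilde A_i)=A_{f,\tilde\pi}$ is a broken circuit of $\mathcal{A}_{\tilde n}$ with respect to the binary order.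
   Context: For $n\ge1$, $\mathcal{A}_n$ is the resonance arrangement in $\mathbb{R}^n$ of hyperplanes $H_I=\{x:\sum_{i\in I}x_i=0\}$, $\emptyset\ne I\subseteq[n]$. Binary order: a subset $I$ of a set of positive integers is encoded as $\sum_{j\in I}2^j$, and subsets (and hyperplanes $H_I$) are linearly ordered by this number. A circuit of an arrangement is a minimally linearly dependent set of hyperplanes (i.e. of their normal vectors); a broken circuit is $C\setminus\{H\}$ where $C$ is a circuit and $H$ its largest element in the fixed order. An $(i,k)$-prototype is an injective map $f:[k-1]\to\mathcal{P}([i])\setminus\{\emptyset\}$; its building blocks are $I^f_j=\{\ell\in[k-1]: j\in f(\ell)\}$ for $1\le j\le i$. Given a partition $\pi$ of $[n+1]$ into $k$ blocks, the blocks are labeled $P_1,\dots,P_k$ increasingly in the binary order (so $n+1\in P_k$), and $A_{f,\pi}=(A_1,\dots,A_i)$ with $A_j=\bigcup_{\ell\in I^f_j}P_\ell\subseteq[n]$. *)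

From HB Require Import structures.
From mathcomp Require Import all_boot all_order all_algebra.
From mathcomp Require Import reals.
Set Implicit Arguments. Unset Strict Implicit. Unset Printing Implicit Defensive.
Import Order.TTheory GRing.Theory Num.Theory.

(* Encoding: the ground set [m] = {1,...,m} is represented by 'I_m, the
   ordinal x standing for the integer x.+1. *)

Definition bincode (m : nat) (I : {set 'I_m}) : nat := \sum_(x in I) 2 ^ x.+1.

(* Normal vector of the hyperplane H_I = {x : sum_{i in I} x_i = 0} in R^n. *)
Definition nvec (R : realType) (n : nat) (I : {set 'I_n}) : 'rV[R]_n :=
  \row_(x < n) (if x \in I then 1%R else 0%R).

(* The hyperplanes of the resonance arrangement A_n: indexed by the nonempty
   subsets I of [n] (I |-> H_I is injective on nonempty subsets). *)
Definition resonance_hyps (n : nat) : {set {set 'I_n}} := [set I | I != set0].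

Definition hyp_free (R : realType) (n : nat) (S : {set {set 'I_n}}) : bool :=
  free [seq nvec R J | J <- enum S].

Definition is_circuit (R : realType) (n : nat) (C : {set {set 'I_n}}) : Prop :=
  [/\ C \subset resonance_hyps n, ~~ hyp_free R C &
      forall D : {set {set 'I_n}}, D \proper C -> hyp_free R D].

Definition is_broken_circuit (R : realType) (n : nat) (S : {set {set 'I_n}}) : Prop :=
  exists C : {set {set 'I_n}}, exists2 H, H \in C &
    [/\ is_circuit R C, (forall H', H' \in C -> bincode H' <= bincode H)%N &
        S = C :\ H].

Definition prototype (i k : nat) (f : 'I_k.-1 -> {set 'I_i}) : Prop :=
  injective f /\ forall l, f l != set0.

Definition building_block (i k : nat) (f : 'I_k.-1 -> {set 'I_i}) (j : 'I_i)
  : {set 'I_k.-1} := [set l | j \in f l].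

Definition is_k_partition (m k : nat) (P : {set {set 'I_m}}) : Prop :=
  partition P [set: 'I_m] /\ #|P| = k.

(* The block with (0-based) rank l in P for the binary order, i.e. the block
   P_(l+1) in the paper's labelling P_1,...,P_k. *)
Definition block_of (m : nat) (P : {set {set 'I_m}}) (l : nat) : {set 'I_m} :=
  odflt set0 [pick B in P | #|[set C in P | bincode C < bincode B]| == l].

Definition Aj (i k n : nat) (f : 'I_k.-1 -> {set 'I_i})
  (P : {set {set 'I_n.+1}}) (j : 'I_i) : {set 'I_n.+1} :=
  \bigcup_(l in building_block f j) block_of P l.

(* View a subset of [n+1] not containing n+1 as a subset of [n]. *)
Definition to_sub_n (n : nat) (A : {set 'I_n.+1}) : {set 'I_n} :=
  [set x : 'I_n | widen_ord (leqnSn n) x \in A].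

Definition A_hyps (i k n : nat) (f : 'I_k.-1 -> {set 'I_i})
  (P : {set {set 'I_n.+1}}) : {set {set 'I_n}} :=
  [set to_sub_n (Aj f P j) | j : 'I_i].

From HB Require Import structures.
From mathcomp Require Import all_boot all_order all_algebra.
From mathcomp Require Import reals.
Set Implicit Arguments. Unset Strict Implicit. Unset Printing Implicit Defensive.
Import GRing.Theory.

(* Let pi = {P_1 < ... < P_k} be a partition of [n+1] into k blocks, labelled
   increasingly in the binary order, so that n+1 lies in P_k.  Then
   F_l := P_l (l < k) is a family of pairwise disjoint nonempty subsets of [n]
   with increasing codes, and A_(f,pi) is the image of the building blocks
   {I^f_1, ..., I^f_i} of f under the map  L |-> U(L) := \bigcup_(l in L) F_l
   from subsets of [k-1] to subsets of [n].  We show that U maps broken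
   circuits of A_(k-1) onto broken circuits of A_n and only those:
   - on normal vectors, U is right multiplication by the injective matrix
     whose rows are the normal vectors of the F_l, and any normal vector in
     its row space comes from some U(L); hence U preserves linear
     (in)dependence and circuits, and the top element of a circuit whose other
     elements are in the image of U is in it too;
   - the codes of disjoint sets with increasing codes are superincreasing, and
     all superincreasing weights order subsets alike, so U preserves the
     binary order.
   So A_(f,pi) is a broken circuit of A_n iff {I^f_1, ..., I^f_i} is a broken
   circuit of A_(k-1), a condition independent of pi. *)

Lemma leq_sum_pred (I : finType) (P Q : pred I) (F : I -> nat) :
  (forall i, P i -> Q i) -> \sum_(i | P i) F i <= \sum_(i | Q i) F i.
Proof.
move=> PQ; rewrite [X in X <= _]big_mkcond [X in _ <= X]big_mkcond /=.
by apply: leq_sum => i _; case: (boolP (P i)) => [/PQ -> | _].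
Qed.

Section Superincreasing.
Variable m : nat.

Definition superincreasing (w : 'I_m -> nat) : Prop :=
  forall l : 'I_m, \sum_(j < m | j < l) w j < w l.

Lemma top_difference (A B : {set 'I_m}) : A != B ->
  exists2 t : 'I_m, (t \in A) != (t \in B) &
    forall j : 'I_m, t < j -> (j \in A) = (j \in B).
Proof.
move=> neqAB; have [x Dx] : exists x, (x \in A) != (x \in B).
  apply/existsP; apply: contraNT neqAB => /existsPn same.
  by apply/eqP/setP => x; apply/eqP; rewrite -[_ == _]negbK same.
have [t Dt tmax] := @arg_maxnP _ x (fun y => (y \in A) != (y \in B)) val Dx.
exists t => // j ltj; apply/eqP; apply: contraTT ltj => Dj.
by rewrite -leqNgt; exact: tmax.
Qed.

Lemma sum_lt_at_top (w : 'I_m -> nat) (A B : {set 'I_m}) (t : 'I_m) :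
  superincreasing w -> t \notin A -> t \in B ->
  (forall j : 'I_m, t < j -> (j \in A) = (j \in B)) ->
  \sum_(j in A) w j < \sum_(j in B) w j.
Proof.
move=> w_si tA tB top; rewrite (bigD1 t tB) /=.
rewrite (bigID (fun j : 'I_m => j < t)) [X in _ < _ + X](bigID (fun j : 'I_m => j < t)) /=.
have high : \sum_(j in A | ~~ (j < t)) w j =
             \sum_(j | (j \in B) && (j != t) && ~~ (j < t)) w j.
  apply: eq_bigl => j; case: (ltngtP j t) => [_ | lt_tj | /val_inj ->].
  - by rewrite !andbF.
  - by rewrite top // -(inj_eq val_inj) gtn_eqF ?andbT.
  - by rewrite (negbTE tA) eqxx andbF.
have low : \sum_(j in A | j < t) w j < w t.
  by apply: leq_ltn_trans (w_si t); apply: leq_sum_pred => j /andP[].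
rewrite high; apply: leq_trans (leq_add low (leqnn _)) _.
by rewrite leq_add2l leq_addl.
Qed.

Lemma sum_superincreasing_lt (w : 'I_m -> nat) (A B : {set 'I_m}) (t : 'I_m) :
  superincreasing w -> (t \in A) != (t \in B) ->
  (forall j : 'I_m, t < j -> (j \in A) = (j \in B)) ->
  (\sum_(j in A) w j < \sum_(j in B) w j) = (t \in B).
Proof.
move=> w_si Dt top; case: (boolP (t \in B)) => tB in Dt *.
  have tA : t \notin A by move: Dt; case: (t \in A).
  exact: sum_lt_at_top w_si tA tB top.
have tA : t \in A by move: Dt; case: (t \in A).
have := sum_lt_at_top w_si tB tA (fun j lt => esym (top j lt)).
by rewrite ltnNge => /negbTE; apply: contraFF => /ltnW.
Qed.

Lemma sum_superincreasing_inj (w : 'I_m -> nat) :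
  superincreasing w -> injective (fun A : {set 'I_m} => \sum_(j in A) w j).
Proof.
move=> w_si A B /= eqAB; apply/eqP; apply: contraT => /top_difference[t Dt top].
have := sum_superincreasing_lt w_si Dt top.
have Dt' : (t \in B) != (t \in A) by rewrite eq_sym.
have := sum_superincreasing_lt w_si Dt' (fun j lt => esym (top j lt)).
by rewrite eqAB ltnn => tA tB; rewrite -tA -tB in Dt.
Qed.

Lemma sum_superincreasing_leq (w w' : 'I_m -> nat) (A B : {set 'I_m}) :
  superincreasing w -> superincreasing w' ->
  (\sum_(j in A) w j <= \sum_(j in B) w j) =
  (\sum_(j in A) w' j <= \sum_(j in B) w' j).
Proof.
move=> w_si w'_si; case: (eqVneq A B) => [-> | /top_difference[t Dt top]].
  by rewrite !leqnn.
have top' (j : 'I_m) : t < j -> (j \in B) = (j \in A) by move=> /top.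
rewrite eq_sym in Dt.
rewrite leqNgt [RHS]leqNgt.
by rewrite (sum_superincreasing_lt w_si Dt top') (sum_superincreasing_lt w'_si Dt top').
Qed.

End Superincreasing.

(* The binary weights 2^(x+1) are superincreasing, because
   2^1 + ... + 2^t = 2^(t+1) - 2. *)
Lemma sum_pow2 t : \sum_(j < t) 2 ^ j.+1 + 2 = 2 ^ t.+1.
Proof.
elim: t => [|t IH]; first by rewrite big_ord0.
by rewrite big_ord_recr /= addnAC IH addnn -mul2n -expnS.
Qed.

Lemma pow2_superincreasing m : superincreasing (fun x : 'I_m => 2 ^ x.+1).
Proof.
move=> l; rewrite -(big_ord_widen _ (fun j => 2 ^ j.+1) (ltnW (ltn_ord l))).
by rewrite -sum_pow2 addn2 leqnSn.
Qed.

Lemma bincode_inj m : injective (@bincode m).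
Proof. exact: sum_superincreasing_inj (@pow2_superincreasing m). Qed.

Lemma bincode_ge m (A : {set 'I_m}) y : y \in A -> 2 ^ y.+1 <= bincode A.
Proof. by move=> yA; rewrite /bincode (bigD1 y) //= leq_addr. Qed.

Lemma bincode_lt m (A : {set 'I_m}) (t : 'I_m) :
  (forall x, x \in A -> x < t) -> bincode A < 2 ^ t.+1.
Proof.
move=> below; apply: leq_ltn_trans (pow2_superincreasing t).
exact: leq_sum_pred.
Qed.

Lemma bincode_lt_below_max m (B C : {set 'I_m}) (t : 'I_m) y :
  t \in B -> (forall x, x \in B -> x <= t) -> t \notin C ->
  bincode C < bincode B -> y \in C -> y < t.
Proof.
move=> tB tmax tC ltCB yC; rewrite ltnNge; apply/negP => le_ty.
have lt_ty : t < y.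
  by rewrite ltn_neqAle le_ty andbT; apply: contraNneq tC => /val_inj ->.
have := bincode_lt (fun x xB => leq_ltn_trans (tmax x xB) lt_ty).
by rewrite ltnNge (leq_trans (bincode_ge yC) (ltnW ltCB)).
Qed.

Lemma set_max m (B : {set 'I_m}) : B != set0 ->
  exists2 t, t \in B & forall x, x \in B -> x <= t.
Proof.
case/set0Pn => x0 x0B.
by case: (@arg_maxnP _ x0 (mem B) val x0B) => t tB tmax; exists t.
Qed.

Lemma perm_enum_imset (T U : finType) (g : T -> U) (A : {set T}) :
  injective g -> perm_eq (enum (g @: A)) [seq g x | x <- enum A].
Proof.
move=> g_inj; apply: uniq_perm; rewrite ?enum_uniq ?map_inj_uniq ?enum_uniq //.
by move=> y; rewrite mem_enum; apply/imsetP/mapP => -[x xA ->];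
  exists x; rewrite ?mem_enum in xA *.
Qed.

Lemma perm_enum_setD1 (T : finType) (C : {set T}) x :
  x \in C -> perm_eq (enum C) (x :: enum (C :\ x)).
Proof.
move=> xC; apply: uniq_perm; rewrite /= ?mem_enum ?inE ?eqxx ?enum_uniq //.
by move=> y; rewrite in_cons !mem_enum !inE; case: eqVneq => // ->.
Qed.

Lemma imset_preimset (T U : finType) (g : T -> U) (C : {set U}) :
  C \subset codom g -> g @: (g @^-1: C) = C.
Proof.
move=> Cg; apply/setP => y; apply/imsetP/idP => [[x] | yC].
  by rewrite inE => gxC ->.
by have [x eqy] := codomP (subsetP Cg y yC); exists x; rewrite // inE -eqy.
Qed.

Lemma preimset_imset (T U : finType) (g : T -> U) (A : {set T}) :
  injective g -> g @^-1: (g @: A) = A.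
Proof. by move=> g_inj; apply/setP => x; rewrite inE mem_imset. Qed.

Lemma imsetD1_inj (T U : finType) (g : T -> U) (A : {set T}) x :
  injective g -> g @: (A :\ x) = g @: A :\ g x.
Proof.
move=> g_inj; apply/setP => y; rewrite [RHS]in_setD1.
apply/imsetP/andP => [[z /setD1P[zx zA] ->] | [ygx /imsetP[z zA eqy]]].
  by split; [rewrite (inj_eq g_inj) | apply: imset_f].
by exists z; rewrite // in_setD1 zA andbT; apply: contraNneq ygx => <-; rewrite eqy.
Qed.

Lemma imset_codom (T U : finType) (g : T -> U) (A : {set T}) :
  g @: A \subset codom g.
Proof. by apply/subsetP => _ /imsetP[x _ ->]; apply: codom_f. Qed.

Section InjectiveMulmx.
Local Open Scope ring_scope.
Variables (K : fieldType) (m n : nat) (M : 'M[K]_(m, n)).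
Hypothesis M_inj : injective (fun u : 'rV[K]_m => u *m M).

Let mulM : 'Hom('rV[K]_m, 'rV[K]_n) := linfun (@mulmxr _ 1 _ _ M).

Let map_mulM (X : seq 'rV[K]_m) : [seq u *m M | u <- X] = map mulM X.
Proof. by apply: eq_map => u; rewrite lfunE. Qed.

Lemma free_mulmx (X : seq 'rV[K]_m) : free [seq u *m M | u <- X] = free X.
Proof.
have ker0 : lker mulM == 0%VS by apply/lker0P => u v; rewrite !lfunE; apply: M_inj.
by rewrite map_mulM /free size_map -limg_span limg_dim_eq // (eqP ker0) capv0.
Qed.

Lemma span_mulmx (X : seq 'rV[K]_m) v :
  v \in <<[seq u *m M | u <- X]>>%VS -> exists u, v = u *m M.
Proof.
by rewrite map_mulM -limg_span => /memv_imgP[u _ ->]; exists u; rewrite lfunE.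
Qed.

End InjectiveMulmx.

Lemma nvec_inj (R : realType) n : injective (@nvec R n).
Proof.
move=> A B /rowP eqAB; apply/setP => x; have := eqAB x; rewrite !mxE.
by do 2 case: (_ \in _) => //; move/eqP; rewrite ?oner_eq0 // eq_sym oner_eq0.
Qed.

Lemma nvec0 (R : realType) n : nvec R (set0 : {set 'I_n}) = 0%R.
Proof. by apply/rowP => x; rewrite !mxE inE. Qed.

Section HyperplaneEmbedding.
Variables (R : realType) (m n : nat) (Phi : {set 'I_m} -> {set 'I_n}).
Variable M : 'M[R]_(m, n).
Hypothesis nvec_Phi : forall L, nvec R (Phi L) = (nvec R L *m M)%R.
Hypothesis M_inj : injective (fun u : 'rV[R]_m => (u *m M)%R).
Hypothesis Phi_onto : forall H u, nvec R H = (u *m M)%R -> H \in codom Phi.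
Hypothesis Phi_code : forall L L',
  (bincode (Phi L) <= bincode (Phi L')) = (bincode L <= bincode L').

(* Preserving the (linear) binary order, Phi is injective ... *)
Lemma Phi_inj : injective Phi.
Proof.
move=> L L' eqPhi; apply: bincode_inj; apply/eqP.
by rewrite eqn_leq -!Phi_code eqPhi leqnn.
Qed.

(* ... and, M being injective, Phi sends hyperplanes to hyperplanes. *)
Lemma Phi_eq0 L : (Phi L == set0) = (L == set0).
Proof.
rewrite -!(inj_eq (@nvec_inj R _)) nvec_Phi !nvec0 -(mul0mx _ M).
exact: (inj_eq M_inj).
Qed.

Lemma nvec_imset (D : {set {set 'I_m}}) :
  perm_eq [seq nvec R J | J <- enum (Phi @: D)]
          [seq (u *m M)%R | u <- [seq nvec R J | J <- enum D]].
Proof.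
rewrite -map_comp (@eq_map _ _ _ (fun J => nvec R (Phi J))) => [|J]; last first.
  by rewrite /= nvec_Phi.
apply: perm_trans (perm_map _ (perm_enum_imset D Phi_inj)) _.
by rewrite -map_comp.
Qed.

Lemma hyp_free_imset (D : {set {set 'I_m}}) : hyp_free R (Phi @: D) = hyp_free R D.
Proof. by rewrite /hyp_free (perm_free (nvec_imset D)) free_mulmx. Qed.

Lemma resonance_imset (C : {set {set 'I_m}}) :
  (Phi @: C \subset resonance_hyps n) = (C \subset resonance_hyps m).
Proof. by rewrite sub_imset_pre; apply: eq_subset_r => L; rewrite !inE Phi_eq0. Qed.

Lemma circuit_imset (C : {set {set 'I_m}}) : is_circuit R (Phi @: C) <-> is_circuit R C.
Proof.
rewrite /is_circuit resonance_imset hyp_free_imset.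
split=> -[res dep minimal]; split => // D ltDC.
  rewrite -hyp_free_imset; apply: minimal; apply: imset_proper ltDC.
  by move=> ? ? _ _; apply: Phi_inj.
have D_image : D \subset codom Phi.
  exact: subset_trans (proper_sub ltDC) (imset_codom _ _).
rewrite -(imset_preimset D_image) hyp_free_imset; apply: minimal.
rewrite -[C](preimset_imset _ Phi_inj).
exact: preimset_proper (imset_codom _ _) ltDC.
Qed.

(* An element of a circuit is spanned by the others; so if the others lie in
   the image of Phi, so does it. *)
Lemma circuit_top_in_image (C : {set {set 'I_n}}) H (S : {set {set 'I_m}}) :
  is_circuit R C -> H \in C -> C :\ H = Phi @: S -> H \in codom Phi.
Proof.
move=> [_ dep minimal] HC eqS.
have free_rest : hyp_free R (C :\ H) by apply: minimal; apply: properD1.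
move: dep; rewrite /hyp_free (perm_free (perm_map _ (perm_enum_setD1 HC))) /=.
rewrite free_cons -/(hyp_free R (C :\ H)) free_rest andbT negbK eqS.
rewrite (eq_span (perm_mem (nvec_imset S))) => /span_mulmx[u nvecH].
exact: Phi_onto nvecH.
Qed.

Lemma broken_circuit_imset (S : {set {set 'I_m}}) :
  is_broken_circuit R (Phi @: S) <-> is_broken_circuit R S.
Proof.
split=> -[C [H HC [circC Hmax eqS]]].
  have H_image := circuit_top_in_image circC HC (esym eqS).
  have C_image : C \subset codom Phi.
    apply/subsetP => J JC; case: (eqVneq J H) => [-> // | neqJH].
    by apply: (subsetP (imset_codom Phi S)); rewrite eqS !inE neqJH.
  have [H0 eqH] := codomP H_image.
  exists (Phi @^-1: C), H0; first by rewrite inE -eqH.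
  split; first by rewrite -circuit_imset (imset_preimset C_image).
    by move=> L; rewrite inE -Phi_code -eqH; apply: Hmax.
  apply: (imset_inj Phi_inj).
  by rewrite eqS (imsetD1_inj _ _ Phi_inj) -eqH (imset_preimset C_image).
exists (Phi @: C), (Phi H); first exact: imset_f.
split; first by rewrite circuit_imset.
  by move=> _ /imsetP[L LC ->]; rewrite Phi_code; apply: Hmax.
by rewrite eqS imsetD1_inj //; exact: Phi_inj.
Qed.

End HyperplaneEmbedding.

Section DisjointFamily.
Variables (R : realType) (m n : nat) (F : 'I_m -> {set 'I_n}).
Hypothesis F_disjoint : forall l l' x, x \in F l -> x \in F l' -> l = l'.
Hypothesis F_neq0 : forall l, F l != set0.
Hypothesis F_code_mono : forall j l : 'I_m, j < l -> bincode (F j) < bincode (F l).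

Definition union_of (L : {set 'I_m}) : {set 'I_n} := \bigcup_(l in L) F l.

(* Each point lies in at most one F_l. *)
Lemma mem_union_of_count L x : (x \in union_of L : nat) = \sum_(l in L) (x \in F l : nat).
Proof.
case: (boolP (x \in union_of L)) => [/bigcupP[l lL xl] | xU].
  rewrite (bigD1 l) //= xl big1 // => l' /andP[_ neq_l'l].
  by apply/eqP; rewrite eqb0; apply: contra neq_l'l => xl'; rewrite (F_disjoint xl' xl).
by rewrite big1 // => l lL; apply/eqP; rewrite eqb0; apply: contra xU => xl;
  apply/bigcupP; exists l.
Qed.

Lemma bincode_union_of L : bincode (union_of L) = \sum_(l in L) bincode (F l).
Proof.
rewrite /bincode big_mkcond (eq_bigr (fun x => \sum_(l in L) (x \in F l) * 2 ^ x.+1)).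
  by rewrite exchange_big; apply: eq_bigr => l _; rewrite [RHS]big_mkcond;
    apply: eq_bigr => x _; case: (x \in F l); rewrite ?mul1n ?mul0n.
by move=> x _; rewrite -big_distrl -mem_union_of_count /=; case: (_ \in _); rewrite ?mul1n.
Qed.

Lemma family_superincreasing : superincreasing (fun l => bincode (F l)).
Proof.
move=> l; have [t tl tmax] := set_max (F_neq0 l).
apply: leq_trans (bincode_ge tl).
rewrite (eq_bigl (fun j => j \in [set j : 'I_m | j < l])) => [|j]; last by rewrite inE.
rewrite -bincode_union_of; apply: bincode_lt => y /bigcupP[j]; rewrite inE => lt_jl yj.
apply: (bincode_lt_below_max tl tmax _ (F_code_mono lt_jl) yj).
by apply: contraTN lt_jl => tj; rewrite (F_disjoint tj tl) ltnn.
Qed.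

Lemma union_of_code L L' :
  (bincode (union_of L) <= bincode (union_of L')) = (bincode L <= bincode L').
Proof.
rewrite !bincode_union_of.
exact: sum_superincreasing_leq family_superincreasing (@pow2_superincreasing m).
Qed.

Local Open Scope ring_scope.

Definition family_mx : 'M[R]_(m, n) := \matrix_(l < m) nvec R (F l).

Lemma family_mxE l x : family_mx l x = if x \in F l then 1 else 0.
Proof. by rewrite !mxE. Qed.

Lemma nvec_union_of L : nvec R (union_of L) = nvec R L *m family_mx.
Proof.
apply/rowP => x; rewrite mulmx_sum_row summxE !mxE.
rewrite (_ : (if _ then 1 else 0) = ((x \in union_of L : nat)%:R)); last by case: (_ \in _).
rewrite mem_union_of_count natr_sum big_mkcond /=; apply: eq_bigr => l _.
by rewrite !mxE; case: (l \in L); case: (x \in F l); rewrite ?mul1r ?mul0r.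
Qed.

Lemma family_mx_entry (u : 'rV[R]_m) l x : x \in F l -> (u *m family_mx) 0 x = u 0 l.
Proof.
move=> xl; rewrite !mxE (bigD1 l) //= family_mxE xl mulr1 big1 ?addr0 // => l' neq_l'l.
rewrite family_mxE; case: ifP => [xl' | _]; last by rewrite mulr0.
by rewrite (F_disjoint xl' xl) eqxx in neq_l'l.
Qed.

(* family_mx is injective, since every F_l is nonempty. *)
Lemma family_mx_inj : injective (fun u : 'rV[R]_m => u *m family_mx).
Proof.
move=> u v /= equv; apply/rowP => l.
have /set0Pn[x xl] := F_neq0 l.
by rewrite -(family_mx_entry u xl) -(family_mx_entry v xl) equv.
Qed.

Lemma family_mx_onto H (u : 'rV[R]_m) :
  nvec R H = u *m family_mx -> H \in codom union_of.
Proof.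
move=> eqH; apply/codomP; exists [set l | u 0 l == 1].
apply: (@nvec_inj R); rewrite nvec_union_of eqH; congr (_ *m _).
apply/rowP => l; have /set0Pn[x xl] := F_neq0 l.
have := family_mx_entry u xl; rewrite -eqH !mxE inE.
by case: (x \in H) => <-; rewrite ?eqxx // eq_sym oner_eq0.
Qed.

Lemma broken_circuit_union_of (S : {set {set 'I_m}}) :
  is_broken_circuit R (union_of @: S) <-> is_broken_circuit R S.
Proof.
exact: broken_circuit_imset nvec_union_of family_mx_inj family_mx_onto union_of_code S.
Qed.

End DisjointFamily.

Section CodeRank.
Variables (M : nat) (P : {set {set 'I_M}}).

Definition code_rank (B : {set 'I_M}) : nat := #|[set C in P | bincode C < bincode B]|.

Lemma code_rank_mono B B' : bincode B <= bincode B' -> code_rank B <= code_rank B'.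
Proof.
move=> le_BB'; apply: subset_leq_card; apply/subsetP => C; rewrite !inE.
by case/andP=> -> /leq_trans; apply.
Qed.

Lemma code_rank_strict B B' : B \in P -> bincode B < bincode B' -> code_rank B < code_rank B'.
Proof.
move=> BP lt_BB'; rewrite /code_rank [X in _ < X](cardsD1 B) inE BP lt_BB' add1n ltnS.
apply: subset_leq_card; apply/subsetP => C; rewrite !inE => /andP[CP lt_CB].
rewrite CP (ltn_trans lt_CB lt_BB') !andbT.
by apply: contraTneq lt_CB => ->; rewrite ltnn.
Qed.

Lemma code_rank_lt B : B \in P -> code_rank B < #|P|.
Proof.
move=> BP; rewrite (cardsD1 B P) BP add1n ltnS; apply: subset_leq_card.
apply/subsetP => C; rewrite !inE => /andP[-> lt_CB]; rewrite andbT.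
by apply: contraTneq lt_CB => ->; rewrite ltnn.
Qed.

Lemma code_rank_onto l : l < #|P| -> exists2 B, B \in P & code_rank B = l.
Proof.
move=> lt_lP; pose ranks := [seq code_rank B | B <- enum P].
have uniq_ranks : uniq ranks.
  rewrite map_inj_in_uniq ?enum_uniq // => B B'; rewrite !mem_enum => BP B'P eq_rank.
  apply: bincode_inj; case: (ltngtP (bincode B) (bincode B')) => // lt.
    by have := code_rank_strict BP lt; rewrite eq_rank ltnn.
  by have := code_rank_strict B'P lt; rewrite eq_rank ltnn.
have sub_ranks : {subset ranks <= iota 0 #|P|}.
  by move=> _ /mapP[B BP ->]; rewrite mem_iota code_rank_lt // -mem_enum.
have size_ranks : size (iota 0 #|P|) <= size ranks by rewrite size_iota size_map cardE.
have [_ eq_ranks] := uniq_min_size uniq_ranks sub_ranks size_ranks.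
have : l \in ranks by rewrite eq_ranks mem_iota.
by case/mapP=> B BP ->; exists B; rewrite // -mem_enum.
Qed.

Lemma block_ofP l : l < #|P| -> block_of P l \in P /\ code_rank (block_of P l) = l.
Proof.
move=> lt_lP; rewrite /block_of; case: pickP => [B /andP[BP /eqP rankB] | none] //.
have [B BP rankB] := code_rank_onto lt_lP.
by have := none B; rewrite BP /= /code_rank in rankB *; rewrite rankB eqxx.
Qed.

End CodeRank.

Lemma bincode_to_sub_n n (X : {set 'I_n.+1}) :
  ord_max \notin X -> bincode (to_sub_n X) = bincode X.
Proof.
move=> maxX; rewrite /bincode [RHS]big_mkcond big_ord_recr /= (negbTE maxX) addn0.
by rewrite big_mkcond; apply: eq_bigr => x _; rewrite inE.
Qed.

Section KPartition.
Variables (n k : nat) (P : {set {set 'I_n.+1}}).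
Hypothesis P_part : is_k_partition k P.

Lemma blockP l : l < k -> block_of P l \in P /\ code_rank P (block_of P l) = l.
Proof. by case: P_part => _ cardP; rewrite -cardP; apply: block_ofP. Qed.

Lemma block_disjoint l l' x :
  l < k -> l' < k -> x \in block_of P l -> x \in block_of P l' -> l = l'.
Proof.
move=> /blockP[lP rank_l] /blockP[l'P rank_l'] xl xl'.
case: P_part => /and3P[_ /trivIsetP disjP _] _.
rewrite -rank_l -rank_l'; congr code_rank; apply/eqP; apply: contraT => neq_ll'.
by have := disjointFr (disjP _ _ lP l'P neq_ll') xl; rewrite xl'.
Qed.

Lemma block_code_mono j l :
  j < l -> l < k -> bincode (block_of P j) < bincode (block_of P l).
Proof.
move=> lt_jl lt_lk; rewrite ltnNge; apply/negP => /(code_rank_mono P).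
by rewrite (blockP lt_lk).2 (blockP (ltn_trans lt_jl lt_lk)).2 leqNgt lt_jl.
Qed.

(* The block containing n+1 has the largest code, hence the last rank. *)
Lemma block_notin_max l : l < k.-1 -> ord_max \notin block_of P l.
Proof.
move=> lt_lk; have lt_lk' : l < k by apply: leq_trans lt_lk (leq_pred k).
have [lP rank_l] := blockP lt_lk'; have [/and3P[_ /trivIsetP disjP _] cardP] := P_part.
apply/negP => maxl.
have below : P :\ block_of P l \subset [set C in P | bincode C < bincode (block_of P l)].
  apply/subsetP => C; rewrite !inE => /andP[neq_Cl CP]; rewrite CP /=.
  apply: leq_trans (bincode_ge maxl); apply: bincode_lt => x xC.
  rewrite ltn_neqAle -ltnS ltn_ord andbT; apply/eqP => /val_inj eq_x.
  by have := disjointFr (disjP _ _ CP lP neq_Cl) xC; rewrite eq_x maxl.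
have := subset_leq_card below; rewrite -/(code_rank P _) rank_l.
move: lt_lk; have := cardsD1 (block_of P l) P; rewrite lP cardP add1n => ->.
by rewrite ltn_predRL ltnS => lt_lc; rewrite leqNgt lt_lc.
Qed.

Definition part_family (l : 'I_k.-1) : {set 'I_n} := to_sub_n (block_of P l).

Let ltn_ord_k (l : 'I_k.-1) : l < k := leq_trans (ltn_ord l) (leq_pred k).

Lemma part_family_disjoint l l' x :
  x \in part_family l -> x \in part_family l' -> l = l'.
Proof.
rewrite !inE => xl xl'; apply: val_inj.
exact: (block_disjoint (ltn_ord_k l) (ltn_ord_k l') xl xl').
Qed.

Lemma part_family_neq0 l : part_family l != set0.
Proof.
have [lP _] := blockP (ltn_ord_k l); have [/and3P[_ _ P0] _] := P_part.
have /set0Pn[y yl] : block_of P l != set0 by apply: contraNneq P0 => <-.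
have lt_yn : y < n.
  rewrite ltn_neqAle -ltnS ltn_ord andbT.
  apply: contraNneq (block_notin_max (ltn_ord l)) => eq_yn.
  by have <- : y = ord_max by apply: val_inj.
apply/set0Pn; exists (Ordinal lt_yn).
by rewrite inE (_ : widen_ord _ _ = y) //; apply: val_inj.
Qed.

Lemma part_family_code_mono (j l : 'I_k.-1) :
  j < l -> bincode (part_family j) < bincode (part_family l).
Proof.
move=> lt_jl; rewrite !bincode_to_sub_n ?(block_notin_max (ltn_ord _)) //.
exact: (block_code_mono lt_jl (ltn_ord_k l)).
Qed.

Lemma A_hyps_union_of i (f : 'I_k.-1 -> {set 'I_i}) :
  A_hyps f P = union_of part_family @: [set building_block f j | j : 'I_i].
Proof.
rewrite /A_hyps -imset_comp; apply: eq_imset => j; apply/setP => x.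
rewrite /= inE /Aj.
by apply/bigcupP/bigcupP => -[l lj xl]; exists l; rewrite // ?inE in xl *.
Qed.

End KPartition.

Theorem proposition5p1 (R : realType) (i k : nat) (f : 'I_k.-1 -> {set 'I_i}) :
  (1 <= i)%N -> (i.+1 <= k <= 2 ^ i)%N -> prototype f ->
  (exists n : nat, exists P : {set {set 'I_n.+1}},
     [/\ (1 <= n)%N, is_k_partition k P & is_broken_circuit R (A_hyps f P)]) ->
  forall (nt : nat) (Pt : {set {set 'I_nt.+1}}),
    (1 <= nt)%N -> is_k_partition k Pt -> is_broken_circuit R (A_hyps f Pt).
Proof.
move=> _ _ _ [n [P [_ P_part bc_P]]] nt Pt _ Pt_part.
have reduce m (Q : {set {set 'I_m.+1}}) : is_k_partition k Q ->
    is_broken_circuit R (A_hyps f Q) <->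
    is_broken_circuit R [set building_block f j | j : 'I_i].
  move=> Q_part; rewrite A_hyps_union_of.
  exact: broken_circuit_union_of (part_family_disjoint Q_part)
    (part_family_neq0 Q_part) (part_family_code_mono Q_part) _.
by apply/(reduce _ _ Pt_part)/(reduce _ _ P_part).
Qed.
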